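(* Let $d\ge2$, $L\ge1$, $\lambda>0$, let $\mu_0^\star,\mu_1^\star\in\mathbb{S}^{d-1}$ be orthonormal, and let the rows $X_1,\dots,X_L$ of $\mathbb{X}$ be i.i.d. with law $\frac12\delta_{\mu_0^\star}+\frac12\delta_{\mu_1^\star}$. Then for all $\mu_0,\mu_1\in\mathbb{R}^d$, $\mathcal{R}(\mu_0,\mu_1)=\mathcal{R}^<(\kappa_0,\kappa_1,\eta_0,\eta_1)$ where $\mathcal{R}^<:\mathbb{R}^4\to\mathbb{R}$ is $$\mathcal{R}^<(\kappa_0,\kappa_1,\eta_0,\eta_1)=1-\lambda\frac{L+1}{L}(\kappa_0^2+\kappa_1^2+\eta_0^2+\eta_1^2)+\lambda^2\frac{L+3}{2L}\big([\kappa_0^2+\eta_0^2]^2+[\kappa_1^2+\eta_1^2]^2\big)+\lambda^2\frac{L-1}{L}(\kappa_0\eta_1+\kappa_1\eta_0)^2.$$ In addition, if $(\mu_0,\mu_1)\in(\mathbb{S}^{d-1})^2$, then $(\kappa_0,\kappa_1,\eta_0,\eta_1)\in[-1,1]^4$.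
   Context: $\kappa_0=\langle\mu_0^\star,\mu_0\rangle$, $\kappa_1=\langle\mu_1^\star,\mu_1\rangle$, $\eta_0=\langle\mu_1,\mu_0^\star\rangle$, $\eta_1=\langle\mu_0,\mu_1^\star\rangle$. $T^{\mathrm{lin},\mu_0,\mu_1}(\mathbb{X})_\ell=\frac{2}{L}\sum_{k=1}^L\lambda\,X_\ell^\top(\mu_0\mu_0^\top+\mu_1\mu_1^\top)X_k\,X_k$ and $\mathcal{R}(\mu_0,\mu_1)=\frac1L\sum_{\ell=1}^L\mathbb{E}\|X_\ell-T^{\mathrm{lin},\mu_0,\mu_1}(\mathbb{X})_\ell\|_2^2$. *)

From mathcomp Require Import all_boot all_order all_algebra.
Set Implicit Arguments. Unset Strict Implicit. Unset Printing Implicit Defensive.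
Import Order.TTheory GRing.Theory Num.Theory.
Local Open Scope ring_scope.

Section Defs.
Variable R : realFieldType.

Definition dotv (d : nat) (u v : 'rV[R]_d) : R := \sum_(i < d) u 0 i * v 0 i.
Definition sqnorm (d : nat) (u : 'rV[R]_d) : R := dotv u u.

(* T^{lin,mu0,mu1}(X)_l = 2/L sum_k lambda X_l^T (mu0 mu0^T + mu1 mu1^T) X_k X_k,
   with X_l written as a row vector, so X_l^T M X_k = (X_l *m M *m X_k^T) 0 0. *)
Definition Tlin (d L : nat) (lambda : R) (mu0 mu1 : 'rV[R]_d)
    (X : 'I_L -> 'rV[R]_d) (l : 'I_L) : 'rV[R]_d :=
  (2 / L%:R) *: \sum_(k < L)
     (lambda * (X l *m (mu0^T *m mu0 + mu1^T *m mu1) *m (X k)^T) 0 0) *: X k.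

(* Expectation over X_1..X_L i.i.d. with law 1/2 delta_{a0} + 1/2 delta_{a1}:
   the uniform average over all 2^L choices s : 'I_L -> bool
   (s l = false <-> X_l = a0, s l = true <-> X_l = a1). *)
Definition Eiid (d L : nat) (a0 a1 : 'rV[R]_d) (f : ('I_L -> 'rV[R]_d) -> R) : R :=
  (1 / (2 ^+ L)) * \sum_(s : {ffun 'I_L -> bool})
     f (fun l => if s l then a1 else a0).

Definition risk (d L : nat) (lambda : R) (ms0 ms1 mu0 mu1 : 'rV[R]_d) : R :=
  (1 / L%:R) * \sum_(l < L)
     Eiid ms0 ms1 (fun X => sqnorm (X l - Tlin lambda mu0 mu1 X l)).

Definition risk_lt (L : nat) (lambda k0 k1 e0 e1 : R) : R :=
  1 - lambda * ((L%:R + 1) / L%:R) * (k0 ^+ 2 + k1 ^+ 2 + e0 ^+ 2 + e1 ^+ 2)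
  + lambda ^+ 2 * ((L%:R + 3) / (2 * L%:R))
      * ((k0 ^+ 2 + e0 ^+ 2) ^+ 2 + (k1 ^+ 2 + e1 ^+ 2) ^+ 2)
  + lambda ^+ 2 * ((L%:R - 1) / L%:R) * (k0 * e1 + k1 * e0) ^+ 2.

End Defs.

From mathcomp Require Import all_boot all_order all_algebra.
From mathcomp Require Import ring lra.
Import Order.TTheory GRing.Theory Num.Theory.
Local Open Scope ring_scope.
Set Implicit Arguments. Unset Strict Implicit.

(* Encode a sample by s : 'I_L -> bool (X_k = mu*_{s_k}) and let m be the sum
   of the spins (-1)^{1 + s_k}.  As there are only two orthonormal token
   values, T(X)_l is a combination of mu*_0 and mu*_1 whose coefficients are
   affine in m and depend on s_l only; grouping the rows by type, the total
   loss sum_l ||X_l - T(X)_l||^2 is a cubic polynomial in m.  Flipping all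
   bits shows that only its even part contributes to the average, and the
   average of m^2 is L because flipping bit i makes E[spin_i spin_j] vanish
   for i <> j. *)

Section DotProduct.
Variables (R : realFieldType) (d : nat).
Implicit Types (u v w : 'rV[R]_d) (c : R).

Lemma dotvC u v : dotv u v = dotv v u.
Proof. by apply: eq_bigr => i _; rewrite mulrC. Qed.

Lemma dotvDl u v w : dotv (u + v) w = dotv u w + dotv v w.
Proof. by rewrite /dotv -big_split; apply: eq_bigr => i _; rewrite mxE mulrDl. Qed.

Lemma dotvNl u w : dotv (- u) w = - dotv u w.
Proof. by rewrite /dotv -sumrN; apply: eq_bigr => i _; rewrite mxE mulNr. Qed.

Lemma dotvZl c u w : dotv (c *: u) w = c * dotv u w.
Proof. by rewrite /dotv mulr_sumr; apply: eq_bigr => i _; rewrite mxE mulrA. Qed.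

Lemma dotvDr u v w : dotv w (u + v) = dotv w u + dotv w v.
Proof. by rewrite dotvC dotvDl !(dotvC w). Qed.

Lemma dotvNr u w : dotv w (- u) = - dotv w u.
Proof. by rewrite dotvC dotvNl dotvC. Qed.

Lemma dotvZr c u w : dotv w (c *: u) = c * dotv w u.
Proof. by rewrite dotvC dotvZl dotvC. Qed.

Definition dotvE := (dotvDl, dotvNl, dotvZl, dotvDr, dotvNr, dotvZr).

Lemma sqnorm_ge0 u : 0 <= sqnorm u.
Proof. by apply: sumr_ge0 => i _; rewrite -expr2 sqr_ge0. Qed.

Lemma dotv_unit_bound u v :
  sqnorm u = 1 -> sqnorm v = 1 -> -1 <= dotv u v <= 1.
Proof.
move=> u1 v1; have := sqnorm_ge0 (u - v); have := sqnorm_ge0 (u + v).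
rewrite /sqnorm !dotvE -/(sqnorm u) -/(sqnorm v) u1 v1 (dotvC v u).
by move=> *; apply/andP; split; lra.
Qed.

Lemma outer_formE (x a y : 'rV[R]_d) :
  (x *m (a^T *m a) *m y^T) 0 0 = dotv x a * dotv a y.
Proof.
have -> : x *m (a^T *m a) = (dotv x a)%:M *m a.
  rewrite mulmxA; congr (_ *m _); apply/matrixP => i j.
  by rewrite !ord1 !mxE mulr1n; apply: eq_bigr => k _; rewrite !mxE.
rewrite mul_scalar_mx -scalemxAl mxE; congr (_ * _).
by rewrite mxE; apply: eq_bigr => k _; rewrite !mxE.
Qed.

Section Orthonormal.
Variables a0 a1 : 'rV[R]_d.
Hypotheses (a0_unit : sqnorm a0 = 1) (a1_unit : sqnorm a1 = 1)
  (a01_orth : dotv a0 a1 = 0).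

Lemma sqnorm_sub_span z x y :
  sqnorm (z - (x *: a0 + y *: a1))
  = sqnorm z - 2 * (x * dotv z a0 + y * dotv z a1) + x ^+ 2 + y ^+ 2.
Proof.
rewrite /sqnorm !dotvE -/(sqnorm z) -!/(sqnorm _) a0_unit a1_unit.
rewrite (dotvC a1 a0) a01_orth !(dotvC _ z); ring.
Qed.

End Orthonormal.
End DotProduct.

Section BooleanCube.
Variables (R : realFieldType) (I : finType).
Implicit Types (s : {ffun I -> bool}) (A : {pred I}).

Definition spin (b : bool) : R := if b then 1 else -1.

Definition spin_sum s : R := \sum_i spin (s i).

Definition flip_on A s : {ffun I -> bool} := [ffun i => (i \in A) (+) s i].

Lemma flip_onK A : involutive (flip_on A).
Proof. by move=> s; apply/ffunP => i; rewrite !ffunE addKb. Qed.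

Lemma spin_flip_on A s i :
  spin (flip_on A s i) = if i \in A then - spin (s i) else spin (s i).
Proof. by rewrite ffunE; case: (i \in A); case: (s i); rewrite /spin ?opprK. Qed.

Lemma sum_flip_on A (F : {ffun I -> bool} -> R) :
  \sum_s F (flip_on A s) = \sum_s F s.
Proof. by rewrite [RHS](reindex_inj (inv_inj (flip_onK A))). Qed.

Lemma spin_sum_flipT s : spin_sum (flip_on predT s) = - spin_sum s.
Proof. by rewrite /spin_sum -sumrN; apply: eq_bigr => i _; rewrite spin_flip_on. Qed.

Lemma sum_bool_split (V : lmodType R) (g : bool -> V) s :
  \sum_i g (s i) = ((#|I|%:R - spin_sum s) / 2) *: g false
                   + ((#|I|%:R + spin_sum s) / 2) *: g true.
Proof.
have two_neq0 : (2 : R) != 0 by rewrite pnatr_eq0.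
have gE b : g b = ((1 - spin b) / 2) *: g false + ((1 + spin b) / 2) *: g true.
  by case: b; rewrite /spin ?opprK ?subrr ?addrN mul0r scale0r ?addr0 ?add0r
       divff ?scale1r.
rewrite (eq_bigr _ (fun i _ => gE (s i))) big_split /= -!scaler_suml -!mulr_suml.
by rewrite sumrB !big_split /= sumr_const.
Qed.

Lemma sum_cube_const (c : R) : \sum_(s : {ffun I -> bool}) c = 2 ^+ #|I| * c.
Proof. by rewrite sumr_const card_ffun card_bool -natrX mulr_natl. Qed.

Lemma sum_spin_mul i j :
  \sum_(s : {ffun I -> bool}) spin (s i) * spin (s j) = (i == j)%:R * 2 ^+ #|I|.
Proof.
have [<-|ij] := eqVneq i j.
  rewrite mul1r (eq_bigr (fun _ => 1)) ?sum_cube_const ?mulr1 // => s _.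
  by case: (s i); rewrite /spin /= ?mulN1r ?opprK ?mulr1.
set S := \sum_(s : {ffun I -> bool}) _.
suff sum0 : S = - S.
  by rewrite mul0r; lra.
rewrite -sumrN -(sum_flip_on (pred1 i)); apply: eq_bigr => s _.
by rewrite !spin_flip_on !inE eqxx eq_sym (negbTE ij) mulNr opprK.
Qed.

Lemma sum_spin_sum_sqr :
  \sum_(s : {ffun I -> bool}) spin_sum s ^+ 2 = #|I|%:R * 2 ^+ #|I|.
Proof.
have delta i : \sum_j (i == j)%:R * 2 ^+ #|I| = 2 ^+ #|I| :> R.
  rewrite (bigD1 i) //= eqxx mul1r big1 ?addr0 // => j.
  by rewrite eq_sym => /negbTE ->; rewrite mul0r.
under eq_bigr do rewrite expr2 big_distrlr /=.
rewrite exchange_big; under eq_bigr do rewrite exchange_big.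
under eq_bigr do under eq_bigr do rewrite sum_spin_mul.
by under eq_bigr do rewrite delta; rewrite sumr_const mulr_natl.
Qed.

Lemma sum_spin_sum_even (f : R -> R) :
  \sum_(s : {ffun I -> bool}) f (spin_sum s)
  = \sum_(s : {ffun I -> bool}) (f (spin_sum s) + f (- spin_sum s)) / 2.
Proof.
rewrite -mulr_suml big_split /=.
rewrite -(sum_flip_on predT (fun s => f (- spin_sum s))).
under [X in _ + X]eq_bigr do rewrite spin_sum_flipT opprK.
lra.
Qed.

Lemma sum_even_quadratic (f : R -> R) e0 e2 :
  (forall x, (f x + f (- x)) / 2 = e0 + e2 * x ^+ 2) ->
  \sum_(s : {ffun I -> bool}) f (spin_sum s) = 2 ^+ #|I| * (e0 + e2 * #|I|%:R).
Proof.
move=> f_even; rewrite sum_spin_sum_even.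
under eq_bigr do rewrite f_even.
by rewrite big_split /= -mulr_sumr sum_spin_sum_sqr sum_cube_const; ring.
Qed.

End BooleanCube.

Arguments spin {R}.
Arguments spin_sum {R I}.

Section LinearTransformerRisk.
Variables (R : realFieldType) (d L : nat) (lambda : R).
Variables ms0 ms1 mu0 mu1 : 'rV[R]_d.
Hypotheses (ms0_unit : sqnorm ms0 = 1) (ms1_unit : sqnorm ms1 = 1)
  (ms01_orth : dotv ms0 ms1 = 0) (L_gt0 : (0 < L)%N).

Let L_neq0 : L%:R != 0 :> R. Proof. by rewrite pnatr_eq0 -lt0n. Qed.

Definition token (b : bool) := if b then ms1 else ms0.

Definition score b b' :=
  dotv (token b) mu0 * dotv mu0 (token b') + dotv (token b) mu1 * dotv mu1 (token b').

(* The coefficient of [token b'] in [Tlin] at a row of type [b], when the sample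
   has spin sum [x] and hence [(L + spin b' * x) / 2] rows of type [b']. *)
Definition weight b b' (x : R) :=
  lambda / L%:R * (L%:R + spin b' * x) * score b b'.

Definition token_loss b x := (1 - weight b b x) ^+ 2 + weight b (~~ b) x ^+ 2.

Definition sample_loss x :=
  (L%:R - x) / 2 * token_loss false x + (L%:R + x) / 2 * token_loss true x.

Lemma score_sym b b' : score b b' = score b' b.
Proof. by rewrite /score !(dotvC mu0) !(dotvC mu1) mulrC [X in _ + X]mulrC. Qed.

Lemma Tlin_tokens (s : {ffun 'I_L -> bool}) l :
  Tlin lambda mu0 mu1 (fun k => token (s k)) l
  = weight (s l) false (spin_sum s) *: ms0 + weight (s l) true (spin_sum s) *: ms1.
Proof.
rewrite /Tlin; under eq_bigr do rewrite mulmxDr mulmxDl mxE !outer_formE -/(score _ _).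
rewrite (sum_bool_split (fun b => (lambda * score (s l) b) *: token b)) card_ord.
rewrite scalerDr !scalerA /weight /=.
by congr (_ *: _ + _ *: _); field.
Qed.

Lemma sqnorm_residual (s : {ffun 'I_L -> bool}) l :
  sqnorm (token (s l) - Tlin lambda mu0 mu1 (fun k => token (s k)) l)
  = token_loss (s l) (spin_sum s).
Proof.
rewrite Tlin_tokens sqnorm_sub_span // /token_loss.
by case: (s l); rewrite /= -/(sqnorm _) ?(dotvC ms1) ms01_orth ?ms0_unit ?ms1_unit; ring.
Qed.

Lemma sum_sqnorm_residual (s : {ffun 'I_L -> bool}) :
  \sum_l sqnorm (token (s l) - Tlin lambda mu0 mu1 (fun k => token (s k)) l)
  = sample_loss (spin_sum s).
Proof.
under eq_bigr do rewrite sqnorm_residual.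
by rewrite (sum_bool_split (V := R^o) (fun b => token_loss b (spin_sum s))) card_ord.
Qed.

Lemma risk_sample_loss :
  risk L lambda ms0 ms1 mu0 mu1
  = (L%:R * 2 ^+ L)^-1 * \sum_(s : {ffun 'I_L -> bool}) sample_loss (spin_sum s).
Proof.
rewrite /risk /Eiid -mulr_sumr exchange_big /= mulrA !div1r -invfM.
by congr (_ * _); apply: eq_bigr => s _; exact: sum_sqnorm_residual.
Qed.

Lemma expected_sample_loss :
  \sum_(s : {ffun 'I_L -> bool}) sample_loss (spin_sum s)
  = 2 ^+ L * (L%:R * risk_lt L lambda (dotv ms0 mu0) (dotv ms1 mu1)
                                      (dotv mu1 ms0) (dotv mu0 ms1)).
Proof.
pose A := score false false; pose B := score true true; pose C := score false true.
rewrite (@sum_even_quadratic _ _ _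
  (L%:R * (1 - lambda * (A + B) + lambda ^+ 2 * ((A ^+ 2 + B ^+ 2) / 2 + C ^+ 2)))
  (lambda / L%:R * (- (A + B) + lambda * (3 / 2 * (A ^+ 2 + B ^+ 2) - C ^+ 2))))
  => [|x].
- rewrite card_ord /risk_lt /A /B /C /score /= !(dotvC ms0) !(dotvC ms1).
  by field.
- rewrite /sample_loss /token_loss /weight /= (score_sym true false) -/A -/B -/C.
  by field.
Qed.

End LinearTransformerRisk.

Theorem proposition7 (R : realFieldType) (d L : nat) (lambda : R)
    (ms0 ms1 : 'rV[R]_d) :
  (2 <= d)%N -> (1 <= L)%N -> 0 < lambda ->
  sqnorm ms0 = 1 -> sqnorm ms1 = 1 -> dotv ms0 ms1 = 0 ->
  forall mu0 mu1 : 'rV[R]_d,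
    let k0 := dotv ms0 mu0 in
    let k1 := dotv ms1 mu1 in
    let e0 := dotv mu1 ms0 in
    let e1 := dotv mu0 ms1 in
    risk L lambda ms0 ms1 mu0 mu1 = risk_lt L lambda k0 k1 e0 e1 /\
    (sqnorm mu0 = 1 -> sqnorm mu1 = 1 ->
       [/\ -1 <= k0 <= 1, -1 <= k1 <= 1, -1 <= e0 <= 1 & -1 <= e1 <= 1]).
Proof.
move=> _ L_gt0 _ ms0_unit ms1_unit ms01_orth mu0 mu1 k0 k1 e0 e1; split; last first.
  by move=> mu0_unit mu1_unit; split; apply: dotv_unit_bound.
rewrite (risk_sample_loss _ _ _ ms0_unit ms1_unit ms01_orth L_gt0).
rewrite expected_sample_loss // [X in _ * X]mulrA [2 ^+ L * _]mulrC mulKf //.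
by rewrite mulf_neq0 ?expf_neq0 // pnatr_eq0 -lt0n.
Qed.
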